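(* Let $(X,\|\cdot\|_X)$ be a finite-dimensional real normed space and $x\in S_X$. Then $\|\cdot\|_X$ fails to be differentiable at $x$ if and only if there exist $\delta>0$ and $\varepsilon_0>0$ such that for every $0<\varepsilon<\varepsilon_0$ there exist $u,v\in S_X\setminus\{x,-x\}$ with $$\max\{\|u-x\|_X,\|v+x\|_X\}\le\varepsilon\quad\text{and}\quad \|u-v\|_X\le 2-\delta\varepsilon.$$
   Context: $S_X=\{x\in X:\|x\|_X=1\}$. *)

From HB Require Import structures.
From mathcomp Require Import all_boot all_order all_algebra.
From mathcomp Require Import all_classical all_reals all_analysis.
Set Implicit Arguments. Unset Strict Implicit. Unset Printing Implicit Defensive.
Import Order.TTheory GRing.Theory Num.Theory.
Import numFieldNormedType.Exports.
Local Open Scope ring_scope.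

Definition unit_sphere {R : realType} (X : normedModType R) : set X :=
  [set x | `|x| = 1].

Definition finite_dim {R : realType} (X : normedModType R) : Prop :=
  exists n : nat, exists f : {linear 'rV[R]_n -> X}, bijective f.
Arguments unit_sphere {R} X.
Arguments finite_dim {R} X.

From HB Require Import structures.
From mathcomp Require Import all_boot all_order all_algebra.
From mathcomp Require Import all_classical all_reals all_analysis.
From mathcomp Require Import ring lra.
Import Order.TTheory GRing.Theory Num.Theory.
Import numFieldNormedType.Exports.
Local Open Scope ring_scope.
Local Open Scope classical_set_scope.

(* The dividing notion is a corner of the norm at x in a direction e:
   |x + t e| + |x - t e| >= 2|x| + c t for some c > 0 and all small t > 0.
   - If the norm is differentiable at x, its derivative L is a subgradient, so
     L <= |.| and L x = |x|; expanding L (u - v) then forbids short chords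
     ([no_antipodal_chords]).
   - If the norm has a corner at x in a direction h, normalising x + t h and
     x - t h gives chords of length at most 2 - c t / 4
     ([antipodal_chords_of_corner]).
   - If it has no corner in any direction, the infimum of the secant slopes in
     each direction is an upper slope ([slope_of_no_corner]); in coordinates,
     an averaging argument and midpoint convexity turn the slopes along a basis
     into a Frechet derivative ([norm_differentiable_of_slopes]).  Finite
     dimension enters only through the boundedness of coordinates
     ([linear_rV_lower_bound]). *)

Section norm_convexity.
Variables (R : realType) (X : normedModType R).

(* Convexity of the norm along a line: the secant slope (|x + t e| - |x|) / t
   is nondecreasing in t > 0. *)
Lemma norm_secant_mono (x e : X) (s t : R) : 0 < s -> s <= t ->
  (`|x + s *: e| - `|x|) * t <= (`|x + t *: e| - `|x|) * s.
Proof.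
move=> s0 st; have t0 : 0 < t := lt_le_trans s0 st.
have decomp : t *: (x + s *: e) = (t - s) *: x + s *: (x + t *: e).
  by rewrite !scalerDr !scalerA scalerBl mulrC addrA subrK.
have : t * `|x + s *: e| <= (t - s) * `|x| + s * `|x + t *: e|.
  rewrite -[t in t * _]ger0_norm ?(ltW t0) // -normrZ decomp.
  apply: le_trans (ler_normD _ _) _.
  by rewrite !normrZ !ger0_norm ?subr_ge0 // ltW.
nra.
Qed.

(* Midpoint convexity; it supplies the lower half of the Frechet expansion. *)
Lemma norm_midpoint_le (x h : X) : 2 * `|x| <= `|x + h| + `|x - h|.
Proof.
have <- : `|x + h + (x - h)| = 2 * `|x|.
  by rewrite addrACA subrr addr0 -mulr2n -scaler_nat normrZ ger0_norm.
exact: ler_normD.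
Qed.

Definition has_corner (x e : X) : Prop :=
  exists c t0 : R, [/\ 0 < c, 0 < t0 & forall t, 0 < t < t0 ->
    2 * `|x| + c * t <= `|x + t *: e| + `|x - t *: e|].

Definition slope_bound (x e : X) (d : R) : Prop :=
  forall eta, 0 < eta -> exists s0, 0 < s0 /\ forall s, `|s| <= s0 ->
    `|x + s *: e| - `|x| - s * d <= eta * `|s|.

(* Without a corner in direction e, the infimum of the secant slopes is an
   upper slope for e: on the right by definition of the infimum, on the left
   because the failure of the corner condition ties the two sides together. *)
Lemma slope_of_no_corner (x e : X) : ~ has_corner x e -> exists d, slope_bound x e d.
Proof.
move=> nc.
have flat c t0 : 0 < c -> 0 < t0 -> exists t, 0 < t < t0 /\
    `|x + t *: e| + `|x - t *: e| < 2 * `|x| + c * t.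
  move=> c0 t00; apply: contrapT => nex; apply: nc; exists c, t0; split=> // t ht.
  by rewrite leNgt; apply/negP => lt; apply: nex; exists t.
pose E := [set y : R | exists2 t : R, 0 < t & y = (`|x + t *: e| - `|x|) / t].
have E_lb t : 0 < t -> - `|e| <= (`|x + t *: e| - `|x|) / t.
  move=> t0; rewrite ler_pdivlMr // mulNr.
  have := ler_dist_dist (x + t *: e) x.
  by rewrite addrAC subrr add0r normrZ gtr0_norm // => /ler_normlP [? ?]; lra.
have hinf : has_inf E.
  split; first by exists ((`|x + 1 *: e| - `|x|) / 1); exists 1.
  by exists (- `|e|) => y [t t0 ->]; exact: E_lb.
have inf_le t : 0 < t -> inf E * t <= `|x + t *: e| - `|x|.
  move=> t0; rewrite -ler_pdivlMr //; apply: ge_inf; first by case: hinf.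
  by exists t.
exists (inf E) => eta eta0.
have [y [t1 t10 ->] ylt] := inf_adherent eta0 hinf.
have {ylt} right1 : `|x + t1 *: e| - `|x| < (inf E + eta) * t1.
  by rewrite -ltr_pdivrMr.
have [t2 [/andP [t20 t21] left2]] := flat eta t1 eta0 t10.
exists t2; split => // s hs.
have [s0|s0|->] := ltgtP s 0; last by rewrite scale0r addr0 normr0; lra.
- have ns0 : 0 < - s by rewrite oppr_gt0.
  have hs' : - s <= t2 by rewrite -(ltr0_norm s0).
  have := norm_secant_mono x (- e) _ _ ns0 hs'.
  rewrite !scalerN scaleNr opprK ltr0_norm // => mono.
  have := inf_le t2 t20.
  nra.
- have hs' : s <= t1 by apply: le_trans (ltW t21); rewrite -(gtr0_norm s0).
  have := norm_secant_mono x e _ _ s0 hs'.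
  rewrite gtr0_norm //; nra.
Qed.

End norm_convexity.
Arguments norm_secant_mono {R X} x e {s t}.
Arguments norm_midpoint_le {R X}.
Arguments has_corner {R X}.
Arguments slope_bound {R X}.
Arguments slope_of_no_corner {R X x e}.

Definition pack_linear {R : pzRingType} {U V : lmodType R} {f : U -> V}
  (lf : linear f) : {linear U -> V} := HB.pack f (GRing.isLinear.Build _ _ _ _ _ lf).

Section finite_dimension.
Variables (R : realType) (X : normedModType R) (n : nat).

(* The norm of 'rV_n is the sup norm of the entries. *)
Lemma row_entry_le_norm (c : 'rV[R]_n) i : `|c 0 i| <= `|c|.
Proof.
rewrite [leRHS]/Num.norm /= mx_normrE; apply/bigmax_geP; right => /=.
by exists (ord0, i).
Qed.

Lemma linear_rV_norm_le (f : {linear 'rV[R]_n -> X}) (c : 'rV[R]_n) :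
  `|f c| <= `|c| * \sum_i `|f (delta_mx 0 i)|.
Proof.
rewrite {1}(row_sum_delta c) linear_sum mulr_sumr.
apply: le_trans (ler_norm_sum _ _ _) _; apply: ler_sum => i _.
by rewrite linearZ normrZ ler_wpM2r // row_entry_le_norm.
Qed.

Lemma linear_rV_continuous (f : {linear 'rV[R]_n -> X}) : continuous f.
Proof.
apply: bounded_linear_continuous; apply/bounded_funP => r.
exists (r * \sum_i `|f (delta_mx 0 i)|) => c hc.
apply: le_trans (linear_rV_norm_le f c) _; rewrite ler_wpM2r //.
by apply: sumr_ge0 => i _.
Qed.

Lemma rV_unit_sphere_compact : compact [set c : 'rV[R]_n | `|c| = 1].
Proof.
apply: bounded_closed_compact.
  exists 1; split; first by rewrite num_real.
  by move=> y y1 c /= ->; exact: ltW.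
have -> : [set c : 'rV[R]_n | `|c| = 1] = (fun c => `|c|) @^-1` [set x | x = 1] by [].
apply: preimage_closed; last exact: closed_eq.
by move=> c _; exact: norm_continuous.
Qed.

(* An injective linear map out of 'rV_n is bounded below: its norm attains a
   positive minimum on the compact unit sphere.  This is where finite
   dimension is used. *)
Lemma linear_rV_lower_bound (f : {linear 'rV[R]_n -> X}) : injective f ->
  exists2 C : R, 0 < C & forall c, `|c| <= C * `|f c|.
Proof.
move=> finj.
have [[c0 c0n]|allz] := pselect (exists c : 'rV[R]_n, c != 0); last first.
  exists 1 => // c; have [->|cn] := eqVneq c 0; first by rewrite normr0 mul1r.
  by exfalso; apply: allz; exists c.
pose S := [set c : 'rV[R]_n | `|c| = 1].
have S0 : S !=set0 by exists (`|c0|^-1 *: c0); rewrite /S /= normfZV.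
have fS : {within S, continuous (fun c => `|f c|)}.
  apply: continuous_subspaceT => c.
  exact: continuous_comp (linear_rV_continuous f c) (@norm_continuous _ _ _).
have [cm cmS cmin] := EVT_min_rV S0 rV_unit_sphere_compact fS.
have cm1 : `|cm| = 1 by move: cmS; rewrite inE.
have fpos : 0 < `|f cm|.
  rewrite normr_gt0; apply/negP => /eqP fc0.
  have cm0 : cm = 0 by apply: finj; rewrite fc0 linear0.
  by move: cm1; rewrite cm0 normr0 => /eqP; rewrite eq_sym oner_eq0.
exists (`|f cm|^-1); first by rewrite invr_gt0.
move=> c; have [->|cn] := eqVneq c 0; first by rewrite normr0 mulr_ge0 // invr_ge0.
have cp : 0 < `|c| by rewrite normr_gt0.
have := cmin (`|c|^-1 *: c); rewrite inE /S /= normfZV // => /(_ erefl).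
rewrite linearZ normrZ ger0_norm ?invr_ge0 // => h.
rewrite -(ler_pM2l cp) mulrA mulfV ?gt_eqF // mul1r in h.
by rewrite -(ler_pM2l fpos) mulrA mulfV ?gt_eqF // mul1r mulrC.
Qed.

End finite_dimension.
Arguments row_entry_le_norm {R n} c i.
Arguments linear_rV_lower_bound {R X n} f.

Lemma differentiable_of_expansion {R : realType} {V W : normedModType R}
    (f : V -> W) (df : {linear V -> W}) (x : V) :
  continuous df -> f \o shift x = cst (f x) + df +o_ 0 id -> differentiable f x.
Proof.
by move=> dfc dxf; apply/diff_locallyP; rewrite (diff_unique dfc dxf).
Qed.

(* X is identified with 'rV_n.+1 by the linear isomorphism f with inverse g;
   the candidate derivative is the linear form with value d i on the i-th
   basis vector. *)
Section gateaux_to_frechet.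
Variables (R : realType) (X : normedModType R) (n : nat).
Variables (f : {linear 'rV[R]_n.+1 -> X}) (g : X -> 'rV[R]_n.+1).
Hypotheses (fK : cancel f g) (gK : cancel g f).

Let g_linear : linear g := can2_linear fK gK.
Let G : {linear X -> 'rV[R]_n.+1} := pack_linear g_linear.
Let basis (i : 'I_n.+1) : X := f (delta_mx 0 i).

Definition coord_form (d : 'I_n.+1 -> R) (y : X) : R := \sum_i g y 0 i * d i.

Lemma coord_form_linear d : linear (coord_form d).
Proof.
move=> a u v; rewrite /coord_form g_linear scaler_sumr -big_split /=.
by apply: eq_bigr => i _; rewrite !mxE mulrDl -mulrA.
Qed.

Lemma coord_bound : exists2 C : R, 0 < C & forall y, `|g y| <= C * `|y|.
Proof.
have [C C0 HC] := linear_rV_lower_bound f (can_inj fK).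
by exists C => // y; have := HC (g y); rewrite gK.
Qed.

Lemma coord_form_continuous d : continuous (coord_form d).
Proof.
have [C C0 HC] := coord_bound.
apply: (@bounded_linear_continuous _ _ _ (pack_linear (coord_form_linear d))).
apply/bounded_funP => r; exists (C * r * \sum_i `|d i|) => y hy /=.
rewrite /coord_form mulr_sumr; apply: le_trans (ler_norm_sum _ _ _) _.
apply: ler_sum => i _; rewrite normrM ler_wpM2r //.
apply: le_trans (row_entry_le_norm _ i) (le_trans (HC y) _).
by rewrite ler_wpM2l // ltW.
Qed.

(* Averaging trick: x + h is the average of the points x + (n+1) h_i e_i,
   so by the triangle inequality the upper slopes along the basis give an upper
   expansion of the norm in every direction. *)
Lemma norm_expansion_upper (x h : X) (d s0 : 'I_n.+1 -> R) (eta : R) :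
  (forall i s, `|s| <= s0 i ->
     `|x + s *: basis i| - `|x| - s * d i <= eta * `|s|) ->
  (forall i, `|n.+1%:R * g h 0 i| <= s0 i) ->
  `|x + h| - `|x| - coord_form d h <= eta * \sum_i `|g h 0 i|.
Proof.
move=> hd hs0; have nR : 0 < n.+1%:R :> R by rewrite ltr0n.
have ni : 0 <= n.+1%:R^-1 :> R by rewrite invr_ge0 ltW.
have avg : x + h = \sum_i n.+1%:R^-1 *: (x + (n.+1%:R * g h 0 i) *: basis i).
  have term i : n.+1%:R^-1 *: (x + (n.+1%:R * g h 0 i) *: basis i)
      = n.+1%:R^-1 *: x + g h 0 i *: basis i.
    by rewrite scalerDr scalerA mulrA mulVf ?gt_eqF // mul1r.
  rewrite (eq_bigr _ (fun i _ => term i)) big_split /= sumr_const card_ord.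
  rewrite -scaler_nat scalerA mulfV ?gt_eqF // scale1r; congr (_ + _).
  rewrite -{1}(gK h) {1}(row_sum_delta (g h)) linear_sum.
  by apply: eq_bigr => i _; rewrite linearZ.
have avg_x : \sum_(i < n.+1) n.+1%:R^-1 * `|x| = `|x|.
  by rewrite sumr_const card_ord -[LHS]mulr_natl mulrA mulfV ?gt_eqF // mul1r.
rewrite avg -[X in _ - X - _ <= _]avg_x /coord_form.
apply: le_trans (lerB (lerB (ler_norm_sum _ _ _) (lexx _)) (lexx _)) _.
rewrite -!sumrB mulr_sumr; apply: ler_sum => i _.
have := hd i _ (hs0 i); rewrite normrM (ger0_norm (ltW nR)) normrZ (ger0_norm ni).
rewrite -(ler_pM2l nR) !mulrBr !mulrA mulfV ?gt_eqF // !mul1r.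
lra.
Qed.

(* Upper slopes along a basis make the norm Frechet differentiable: the upper
   expansion at h, together with the one at -h and midpoint convexity,
   squeezes |x + h| - |x| - L h. *)
Lemma norm_differentiable_of_slopes (x : X) (d : 'I_n.+1 -> R) :
  (forall i, slope_bound x (basis i) (d i)) -> differentiable (fun y : X => `|y|) x.
Proof.
move=> hd; have [C C0 HC] := coord_bound.
have nR : 0 < n.+1%:R :> R by rewrite ltr0n.
have coord_sum y : \sum_i `|g y 0 i| <= n.+1%:R * (C * `|y|).
  apply: le_trans (_ : \sum_(i < n.+1) (C * `|y|) <= _).
    by apply: ler_sum => i _; apply: le_trans (HC y); exact: row_entry_le_norm.
  by rewrite sumr_const card_ord mulr_natl.
apply: (@differentiable_of_expansion _ _ _ _ (pack_linear (coord_form_linear d)) _ (coord_form_continuous d)).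
apply/eqaddoP => eps eps0.
pose eta := eps / (n.+1%:R * C).
have eta0 : 0 < eta by rewrite divr_gt0 // mulr_gt0.
have [s0 hs0] := choice (fun i => hd i eta eta0).
have small : \forall h \near (0 : X), forall i, `|n.+1%:R * g h 0 i| <= s0 i.
  apply: filter_forall => i; apply/nbhs_norm0P.
  exists (s0 i / (n.+1%:R * C)) => [|h /= hh].
    by rewrite /= divr_gt0 ?mulr_gt0 // (hs0 i).1.
  rewrite normrM (ger0_norm (ltW nR)).
  apply: le_trans (_ : n.+1%:R * (C * `|h|) <= _).
    by rewrite ler_pM2l //; apply: le_trans (row_entry_le_norm (g h) i) (HC h).
  by rewrite mulrA -ler_pdivlMl ?mulr_gt0 // mulrC ltW.
apply: filterS small => h hh /=.
have gN : g (- h) = - g h := linearN G h.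
have up := norm_expansion_upper _ _ _ _ _ (fun i => (hs0 i).2) hh.
have hhN i : `|n.+1%:R * g (- h) 0 i| <= s0 i by rewrite gN mxE mulrN normrN.
have down := norm_expansion_upper _ _ _ _ _ (fun i => (hs0 i).2) hhN.
have sumN : \sum_i `|g (- h) 0 i| = \sum_i `|g h 0 i|.
  by apply: eq_bigr => i _; rewrite gN mxE normrN.
have LN : coord_form d (- h) = - coord_form d h.
  exact: (linearN (pack_linear (coord_form_linear d))).
rewrite sumN LN in down.
have bound : eta * \sum_i `|g h 0 i| <= eps * `|h|.
  apply: le_trans (ler_wpM2l (ltW eta0) (coord_sum h)) _.
  by rewrite /eta [n.+1%:R * (C * _)]mulrA mulrA divfK // gt_eqF // mulr_gt0.
have mid := norm_midpoint_le x h.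
change (`| `|h + x| - (`|x| + coord_form d h)| <= eps * `|h|).
rewrite (addrC h x) ler_norml; apply/andP; split; lra.
Qed.
End gateaux_to_frechet.
Arguments norm_differentiable_of_slopes {R X n f g} fK gK {x d}.

Definition antipodal_chords {R : realType} {X : normedModType R} (x : X) : Prop :=
  exists delta : R, 0 < delta /\ exists eps0 : R, 0 < eps0 /\
    forall eps : R, 0 < eps < eps0 ->
      exists u v : X,
        u \in unit_sphere X `\` [set x; - x] /\
        v \in unit_sphere X `\` [set x; - x] /\
        Num.max `|u - x| `|v + x| <= eps /\
        `|u - v| <= 2 - delta * eps.

Section norm_derivative.
Variables (R : realType) (X : normedModType R) (x : X).
Hypothesis dx : differentiable (fun y : X => `|y|) x.
Let L := 'd (fun y : X => `|y|) x.

Lemma norm_diff_local (eta : R) : 0 < eta -> exists2 rho : R, 0 < rho &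
  forall h, `|h| < rho -> `| `|x + h| - `|x| - L h| <= eta * `|h|.
Proof.
move=> eta0; have /eqaddoP /(_ eta eta0) /nbhs_norm0P [rho rho0 hr] := diff_locally dx.
exists rho => // h /hr.
change (`| `|h + x| - (`|x| + L h)| <= eta * `|h| ->
  `| `|x + h| - `|x| - L h| <= eta * `|h|).
by rewrite (addrC h x) opprD addrA.
Qed.

(* L is a subgradient: by convexity the secant slope in direction h dominates
   its limit L h. *)
Lemma norm_diff_subgradient (h : X) : `|x| + L h <= `|x + h|.
Proof.
apply/ler_addgt0Pr => e e0; have hn := normr_ge0 h.
have h1 : 0 < `|h| + 1 by rewrite ltr_wpDl.
pose eta := e / (`|h| + 1).
have eta0 : 0 < eta by rewrite divr_gt0.
have eta_h : eta * `|h| <= e.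
  by rewrite /eta mulrAC ler_pdivrMr // ler_pM2l // lerDl.
have [rho rho0 hr] := norm_diff_local _ eta0.
pose s := rho / (2 * (`|h| + rho)).
have hrho : 0 < `|h| + rho by rewrite ltr_wpDl.
have s0 : 0 < s by rewrite divr_gt0 // mulr_gt0.
have s1 : s <= 1 by rewrite ler_pdivrMr ?mulr_gt0 // mul1r; lra.
have shr : `|s *: h| < rho.
  rewrite normrZ gtr0_norm // /s mulrAC ltr_pdivrMr ?mulr_gt0 //.
  by rewrite ltr_pM2l //; nra.
have := hr _ shr; rewrite linearZ /= normrZ gtr0_norm // => /ler_normlP [loc _].
have := norm_secant_mono x h s0 s1; rewrite scale1r mulr1 => mono.
have s_eta : s * (eta * `|h|) <= s * e by rewrite ler_pM2l.
have : s * (`|x| + L h) <= s * (`|x + h| + e).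
  change (s *: L h) with (s * L h) in loc; lra.
by rewrite ler_pM2l.
Qed.

Lemma norm_diff_le (z : X) : L z <= `|z|.
Proof.
have := norm_diff_subgradient z; have := ler_normD x z; lra.
Qed.

Lemma norm_diff_self : `|x| <= L x.
Proof.
have := norm_diff_subgradient (- x).
by rewrite subrr normr0 (linearN L); lra.
Qed.

(* At a unit vector of differentiability there are no short antipodal chords:
   L (u - v) = L (u - x) + L (-v - x) + 2 L x is at least 2 - o(eps). *)
Lemma no_antipodal_chords : `|x| = 1 -> ~ antipodal_chords x.
Proof.
move=> hx [delta [d0 [eps0 [e00 chords]]]].
have eta0 : 0 < delta / 4 by rewrite divr_gt0.
have [rho rho0 hr] := norm_diff_local _ eta0.
pose eps := Num.min eps0 rho / 2.
have m0 : 0 < Num.min eps0 rho by rewrite lt_min e00.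
have e0 : 0 < eps by rewrite divr_gt0.
have e_lt : eps < Num.min eps0 rho by rewrite /eps ltr_pdivrMr // ltr_pMr // ltr1n.
move: e_lt; rewrite lt_min => /andP [e_eps0 e_rho].
have [u [v [hu [hv [hm short]]]]] := chords eps (ltac:(by rewrite e0 e_eps0)).
move: hu hv; rewrite !inE => -[u1 _] [v1 _]; move: hm; rewrite ge_max => /andP [hux hvx].
have hvx' : `|(- v) - x| <= eps by rewrite -opprD normrN.
have /ler_normlP [_ loc_u] := hr _ (le_lt_trans hux e_rho).
have /ler_normlP [_ loc_v] := hr _ (le_lt_trans hvx' e_rho).
rewrite !(addrC x) !subrK normrN u1 v1 hx in loc_u loc_v.
have split_uv : u - v = (u - x) + (- v - x) + x + x.
  by rewrite !addrA subrK addrAC subrK.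
have Luv : L (u - v) = L (u - x) + L (- v - x) + L x + L x.
  by rewrite split_uv !linearD.
have := norm_diff_le (u - v); rewrite Luv.
have := norm_diff_self; rewrite hx.
have : delta / 4 * `|u - x| <= delta / 4 * eps by rewrite ler_pM2l.
have : delta / 4 * `|- v - x| <= delta / 4 * eps by rewrite ler_pM2l.
have : 0 < delta * eps by rewrite mulr_gt0.
lra.
Qed.

End norm_derivative.
Arguments no_antipodal_chords {R X x}.

(* Construction of short antipodal chords from a corner: u and -v are the
   normalisations of x + t h and x - t h. *)
Section antipodal_chords_of_corner.
Variables (R : realType) (X : normedModType R).

Lemma normalized_sum_le (y1 y2 : X) : 0 < `|y1| -> 0 < `|y2| ->
  `| `|y1|^-1 *: y1 + `|y2|^-1 *: y2| <=
  (2 * `|y1 + y2| + `| `|y2| - `|y1| | * `| `|y1|^-1 *: y1 - `|y2|^-1 *: y2|)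
  / (`|y1| + `|y2|).
Proof.
move=> p1 p2; set u1 := _ *: y1; set u2 := _ *: y2; set N1 := `|y1|; set N2 := `|y2|.
have S0 : 0 < N1 + N2 by rewrite addr_gt0.
have yu1 : y1 = N1 *: u1 by rewrite /u1 scalerA mulfV ?gt_eqF // scale1r.
have yu2 : y2 = N2 *: u2 by rewrite /u2 scalerA mulfV ?gt_eqF // scale1r.
clearbody u1 u2.
have -> : u1 + u2 = (2 / (N1 + N2)) *: (y1 + y2) + ((N2 - N1) / (N1 + N2)) *: (u1 - u2).
  rewrite yu1 yu2 scalerDr !scalerA scalerBr addrACA -scalerDl -scalerBl.
  rewrite -[u1 in LHS]scale1r -[u2 in LHS]scale1r.
  by congr (_ *: _ + _ *: _); field; rewrite gt_eqF.
apply: le_trans (ler_normD _ _) _.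
rewrite !normrZ normfV (gtr0_norm S0) (ger0_norm (_ : 0 <= 2 :> R)) //.
by rewrite le_eqVlt; apply/orP; left; apply/eqP; field; rewrite gt_eqF.
Qed.

Variables (x : X).
Hypothesis hx : `|x| = 1.

Lemma normalize_dist (y : X) : 0 < `|y| -> `| `|y|^-1 *: y - x| <= 2 * `|y - x|.
Proof.
move=> y0.
have -> : `|y|^-1 *: y - x = (`|y|^-1 - 1) *: y + (y - x).
  by rewrite scalerBl scale1r addrA subrK.
apply: le_trans (ler_normD _ _) _; rewrite normrZ.
have -> : `| `|y|^-1 - 1| * `|y| = `| `|x| - `|y| |.
  by rewrite hx -{2}(gtr0_norm y0) -normrM mulrBl mulVf ?gt_eqF // mul1r.
by rewrite distrC mulr2n mulrDl mul1r lerD2r ler_dist_dist.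
Qed.

Lemma collinear_of_normalize_pm (w : X) : 0 < `|x + w| ->
  [set x; - x] (`|x + w|^-1 *: (x + w)) -> exists l : R, w = l *: x.
Proof.
move=> p; set N := `|x + w|.
have xw : x + w = N *: (N^-1 *: (x + w)) by rewrite scalerA mulfV ?gt_eqF // scale1r.
move=> [ux|ux]; rewrite ux in xw.
- by exists (N - 1); rewrite scalerBl scale1r -xw addrC addKr.
- by exists (- N - 1); rewrite scalerBl scale1r scaleNr -scalerN -xw addrC addKr.
Qed.

(* The norm has no corner at x along x itself. *)
Lemma collinear_corner_free (l : R) : `|l| <= 1 ->
  `|x + l *: x| + `|x - l *: x| = 2.
Proof.
move=> /ler_normlP [l1 l2].
rewrite -{1 3}(scale1r x) -scalerDl -scalerBl !normrZ hx !mulr1.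
by rewrite !ger0_norm; lra.
Qed.

(* Hence a strict corner inequality in direction w keeps the normalisation of
   x + w off {x, -x}. *)
Lemma normalize_in_punctured_sphere (w : X) :
  `|w| < 1 -> 2 < `|x + w| + `|x - w| ->
  `|x + w|^-1 *: (x + w) \in unit_sphere X `\` [set x; - x].
Proof.
move=> w1 corner.
have p : 0 < `|x + w|.
  have := ler_dist_dist (x + w) x; rewrite addrAC subrr add0r hx.
  by move=> /ler_normlP [? ?]; lra.
apply/mem_set; split; first by rewrite /unit_sphere /= normfZV // -normr_gt0.
move=> /(collinear_of_normalize_pm _ p) [l wl].
move: w1 corner; rewrite wl normrZ hx mulr1 => l1.
by rewrite collinear_corner_free ?ltW // ltxx.
Qed.

Lemma punctured_sphereN (u : X) :
  u \in unit_sphere X `\` [set x; - x] -> - u \in unit_sphere X `\` [set x; - x].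
Proof.
rewrite !inE => -[u1 upm]; split; first by rewrite /unit_sphere /= normrN.
by move=> [ux|ux]; apply: upm; [right; rewrite -ux opprK|left; apply: oppr_inj].
Qed.

Lemma corner_chord (w : X) (gam : R) :
  0 < gam < 2 -> 16 * `|w| ^+ 2 < gam -> 2 + gam <= `|x + w| + `|x - w| ->
  exists u v : X,
    [/\ u \in unit_sphere X `\` [set x; - x], v \in unit_sphere X `\` [set x; - x],
     Num.max `|u - x| `|v + x| <= 2 * `|w| & `|u - v| <= 2 - gam / 4].
Proof.
move=> /andP [g0 g2]; rewrite expr2 => small corner.
have w0 : 0 <= `|w| := normr_ge0 w.
have w_half : `|w| < 1 / 2 by nra.
have /ler_normlP [N1l N1u] : `| `|x + w| - `|x| | <= `|w|.
  by have := ler_dist_dist (x + w) x; rewrite addrAC subrr add0r.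
have /ler_normlP [N2l N2u] : `| `|x - w| - `|x| | <= `|w|.
  by have := ler_dist_dist (x - w) x; rewrite addrAC subrr add0r normrN.
rewrite hx in N1l N1u N2l N2u.
have N1p : 0 < `|x + w| by lra.
have N2p : 0 < `|x - w| by lra.
have du := normalize_dist _ N1p; rewrite addrAC subrr add0r in du.
have du' := normalize_dist _ N2p; rewrite addrAC subrr add0r normrN in du'.
exists (`|x + w|^-1 *: (x + w)), (- (`|x - w|^-1 *: (x - w))); split.
- by apply: normalize_in_punctured_sphere; lra.
- apply: punctured_sphereN; apply: normalize_in_punctured_sphere;
    rewrite ?normrN ?opprK; lra.
- by rewrite ge_max du addrC distrC du'.
rewrite opprK; apply: le_trans (normalized_sum_le _ _ N1p N2p) _.
have -> : `|x + w + (x - w)| = 2.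
  by rewrite addrACA subrr addr0 -mulr2n -scaler_nat normrZ hx mulr1 ger0_norm.
have dN : `| `|x - w| - `|x + w| | <= 2 * `|w| by apply/ler_normlP; split; lra.
have du_u' : `| `|x + w|^-1 *: (x + w) - `|x - w|^-1 *: (x - w)| <= 4 * `|w|.
  apply: le_trans (ler_distD x _ _) _; rewrite [`|x - _ *: _|]distrC; lra.
have prod := ler_pM (normr_ge0 _) (normr_ge0 _) dN du_u'.
rewrite ler_pdivrMr ?addr_gt0 //.
have : (2 - gam / 4) * (2 + gam) <= (2 - gam / 4) * (`|x + w| + `|x - w|).
  by rewrite ler_wpM2l //; lra.
have : gam * gam < 2 * gam by rewrite ltr_pM2r.
lra.
Qed.

(* A corner gives short antipodal chords, taking w = t h with t proportional
   to eps. *)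
Lemma antipodal_chords_of_corner (h : X) : has_corner x h -> antipodal_chords x.
Proof.
move=> [c [t0 [c0 t00 corner]]]; rewrite hx mulr1 in corner.
have M0 : 0 < `|h|.
  rewrite normr_gt0; apply/negP => /eqP h0.
  have t_in : 0 < t0 / 2 < t0 by rewrite divr_gt0 //= ltr_pdivrMr // ltr_pMr // ltr1n.
  have := corner _ t_in; rewrite h0 scaler0 subr0 addr0 hx.
  have : 0 < c * (t0 / 2) by rewrite mulr_gt0 // divr_gt0.
  lra.
set M := `|h| in M0 *.
pose T := Num.min t0 (Num.min (2 / c) (c / (16 * M ^+ 2))).
have T0 : 0 < T by rewrite !lt_min t00 !divr_gt0 ?mulr_gt0 ?exprn_gt0.
exists (c / (8 * M)); split; first by rewrite divr_gt0 ?mulr_gt0.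
exists (2 * M * T); split; first by rewrite !mulr_gt0.
move=> eps /andP [e0 eT].
have M2 : 0 < 2 * M by rewrite mulr_gt0.
pose t := eps / (2 * M).
have t0' : 0 < t by rewrite divr_gt0.
have epsE : eps = 2 * M * t by rewrite /t mulrC divfK ?gt_eqF.
have : t < T by rewrite /t ltr_pdivrMr // mulrC.
rewrite !lt_min => /andP [tt0 /andP [t_c t_small]].
have tM : `|t *: h| = t * M by rewrite normrZ gtr0_norm.
have [|||u [v [hu hv hmax huv]]] := corner_chord (t *: h) (c * t).
- by rewrite mulr_gt0 //= -ltr_pdivlMl // mulrC.
- move: t_small; rewrite ltr_pdivlMr ?mulr_gt0 ?exprn_gt0 // tM => t_small.
  have : t * (t * (16 * M ^+ 2)) < t * c by rewrite ltr_pM2l.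
  by rewrite (mulrC c); apply: le_lt_trans; rewrite le_eqVlt; apply/orP; left; apply/eqP; ring.
- by apply: corner; rewrite t0' tt0.
exists u, v; do !split => //; first by rewrite epsE -mulrA (mulrC M) -tM.
suff -> : c / (8 * M) * eps = c * t / 4 by [].
by rewrite epsE; field; rewrite gt_eqF.
Qed.

End antipodal_chords_of_corner.
Arguments antipodal_chords_of_corner {R X x} hx {h}.

(* Without corners in any direction, the norm of a finite-dimensional space is
   differentiable at any x <> 0 (the zero-dimensional case is excluded by x). *)
Lemma norm_differentiable_of_no_corner {R : realType} {X : normedModType R} (x : X) :
  finite_dim X -> x != 0 -> (forall e : X, ~ has_corner x e) ->
  differentiable (fun y : X => `|y|) x.
Proof.
move=> [[|n] [f [g fK gK]]] x0 smooth.
  by move: x0; rewrite -(gK x) (thinmx0 (g x)) linear0 eqxx.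
have [d hd] := choice (fun i : 'I_n.+1 => slope_of_no_corner (smooth (f (delta_mx 0 i)))).
exact: (norm_differentiable_of_slopes (f := f) fK gK hd).
Qed.

Theorem proposition1 (R : realType) (X : normedModType R)
  (hfin : finite_dim X) (x : X) (hx : x \in unit_sphere X) :
  ~ differentiable (fun y : X => `|y|) x <->
  exists delta : R, 0 < delta /\ exists eps0 : R, 0 < eps0 /\
    forall eps : R, 0 < eps < eps0 ->
      exists u v : X,
        u \in unit_sphere X `\` [set x; - x] /\
        v \in unit_sphere X `\` [set x; - x] /\
        Num.max `|u - x| `|v + x| <= eps /\
        `|u - v| <= 2 - delta * eps.
Proof.
have hx1 : `|x| = 1 by move: hx; rewrite inE.
have x0 : x != 0 by rewrite -normr_gt0 hx1.
split => [not_diff | chords diff]; last exact: no_antipodal_chords diff hx1 chords.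
have [[h corner] | no_corner] := pselect (exists h : X, has_corner x h).
  exact (antipodal_chords_of_corner hx1 corner).
exfalso; apply: not_diff; apply: (norm_differentiable_of_no_corner x hfin x0) => e corner.
by apply: no_corner; exists e.
Qed.
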